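(* Let $\mathcal B$ be any board, let $q'>q>0$ be integers, and let $\mathsf P$ and $\mathsf P'$ be rider pieces such that every basic move of $\mathsf P$ is also a basic move of $\mathsf P'$. Then $D_q(\mathsf P)\mid D_{q'}(\mathsf P)$ and $D_q(\mathsf P)\mid D_q(\mathsf P')$.
   Context: A board $\mathcal B$ is a convex polygon in $\mathbb R^2$ with rational corners. A rider piece $\mathsf P$ has a finite set $\mathcal M$ of basic moves: nonzero integer vectors $(c,d)$ with $\gcd(c,d)=1$, no two parallel. For $q$ pieces, the move arrangement $\mathcal A^q_{\mathsf P}$ in $\mathbb R^{2q}$ consists of the hyperplanes $\mathcal H^{d/c}_{ij}=\{(z_1,\dots,z_q):(z_j-z_i)\cdot(d,-c)=0\}$, $1\le i<j\le q$, $(c,d)\in\mathcal M$. A vertex of the inside-out polytope $(\mathcal B^q,\mathcal A^q_{\mathsf P})$ is a point of $\mathcal B^q$ that is the unique point of an intersection of some hyperplanes of $\mathcal A^q_{\mathsf P}$ and some affine hulls of facets of $\mathcal B^q$. The denominator $D_q(\mathsf P)=D(\mathcal B^q,\mathcal A^q_{\mathsf P})$ is the least common multiple of the least common denominators of the coordinates of all such vertices. *)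

From Stdlib Require Import ClassicalEpsilon.
From mathcomp Require Import all_boot all_order all_algebra.

Set Implicit Arguments.
Unset Strict Implicit.
Unset Printing Implicit Defensive.

Import Order.TTheory GRing.Theory Num.Theory.
Local Open Scope ring_scope.

Definition pt2 := (rat * rat)%type.
Definition cross (u v : pt2) : rat := u.1 * v.2 - u.2 * v.1.
Definition psub (u v : pt2) : pt2 := (u.1 - v.1, u.2 - v.2).

(* A board is given by the list cs of its corners in counterclockwise order
   (indices taken cyclically). *)
Definition corner (cs : seq pt2) (k : nat) : pt2 := nth (0, 0) cs (k %% size cs).
Definition edge_dir (cs : seq pt2) (k : nat) : pt2 :=
  psub (corner cs k.+1) (corner cs k).

(* cs lists the corners of a (2-dimensional) convex polygon counterclockwise:
   at least 3 corners, and every corner not on edge k lies strictly to the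
   left of the line through edge k. *)
Definition is_board (cs : seq pt2) : Prop :=
  (3 <= size cs)%N /\
  forall k j, (k < size cs)%N -> (j < size cs)%N -> j <> k ->
    j <> (k.+1 %% size cs)%N ->
    0 < cross (edge_dir cs k) (psub (nth (0, 0) cs j) (corner cs k)).

Definition in_board (cs : seq pt2) (x : pt2) : Prop :=
  forall k, (k < size cs)%N -> 0 <= cross (edge_dir cs k) (psub x (corner cs k)).

Definition on_edge_line (cs : seq pt2) (k : nat) (x : pt2) : Prop :=
  cross (edge_dir cs k) (psub x (corner cs k)) = 0.

Definition rider (M : seq (int * int)) : Prop :=
  uniq M /\
  (forall m, m \in M -> m != (0, 0) /\ gcdz m.1 m.2 = 1) /\
  (forall m m', m \in M -> m' \in M -> m != m' -> m.1 * m'.2 != m.2 * m'.1).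

Definition config (q : nat) := 'I_q -> pt2.

Definition in_boardq (cs : seq pt2) (q : nat) (z : config q) : Prop :=
  forall i, in_board cs (z i).

Definition move_hyp (q : nat) (m : int * int) (i j : 'I_q) (z : config q) : Prop :=
  ((z j).1 - (z i).1) * m.2%:~R - ((z j).2 - (z i).2) * m.1%:~R = 0.

(* Index type of all hyperplanes of the move arrangement (i < j, move m)
   and all facet affine hulls of B^q (coordinate i lies on edge line k). *)
Definition con (q : nat) (M : seq (int * int)) (n : nat) : finType :=
  (({p : 'I_q * 'I_q | (p.1 < p.2)%N} * seq_sub M) + ('I_q * 'I_n))%type.

Definition sat (cs : seq pt2) (M : seq (int * int)) (q : nat)
  (c : con q M (size cs)) (z : config q) : Prop :=
  match c with
  | inl (p, m) => move_hyp (ssval m) (sval p).1 (sval p).2 z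
  | inr (i, k) => on_edge_line cs k (z i)
  end.

(* z is a vertex of the inside-out polytope (B^q, A^q_P) cut out by the
   family S of hyperplanes / facet hulls: z in B^q and z is the unique point
   of the intersection of the members of S. *)
Definition vertex_of (cs : seq pt2) (M : seq (int * int)) (q : nat)
  (S : {set con q M (size cs)}) (z : config q) : Prop :=
  in_boardq cs z /\
  (forall c, c \in S -> sat c z) /\
  (forall w : config q, (forall c, c \in S -> sat c w) -> forall i, w i = z i).

Definition is_vertex (cs : seq pt2) (M : seq (int * int)) (q : nat) (z : config q) :=
  exists S : {set con q M (size cs)}, vertex_of S z.

Definition lcd (q : nat) (z : config q) : nat :=
  \big[lcmn/1%N]_(i < q) lcmn `|denq (z i).1|%N `|denq (z i).2|%N.

Definition vert_lcd (cs : seq pt2) (M : seq (int * int)) (q : nat)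
  (S : {set con q M (size cs)}) : nat :=
  match excluded_middle_informative (exists z : config q, vertex_of S z) with
  | left h => lcd (proj1_sig (constructive_indefinite_description _ h))
  | right _ => 1%N
  end.

(* Denominator D_q(P) = D(B^q, A^q_P): lcm of the lcds of all vertices
   (each vertex arises from some family S, and each S yields at most one). *)
Definition Denom (cs : seq pt2) (M : seq (int * int)) (q : nat) : nat :=
  \big[lcmn/1%N]_(S : {set con q M (size cs)}) vert_lcd S.

From mathcomp Require Import all_boot all_order all_algebra.
From Stdlib Require Import ClassicalEpsilon.
From mathcomp Require Import ring.

Set Implicit Arguments.
Unset Strict Implicit.
Unset Printing Implicit Defensive.
Import Order.TTheory GRing.Theory Num.Theory.

(* Since D_q(P) is the lcm of the denominators of the vertices, it suffices
   to turn every vertex z for (q, P) into a vertex for (q', P) and for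
   (q, P') whose denominator is a multiple of that of z.  A family of
   hyperplanes for P is also one for P', so z itself is a vertex for P'.
   For q' > q pieces, put every extra piece on the corner where edges 0 and 1
   of the board meet: the two edge lines pin it there, and the first q pieces
   are pinned by the hyperplanes that pinned z. *)

Local Open Scope ring_scope.

Section Denominator.
Variables (cs : seq pt2) (M : seq (int * int)) (q : nat).

Lemma vert_lcd_vertex (S : {set con q M (size cs)}) z :
  vertex_of S z -> vert_lcd S = lcd z.
Proof.
move=> zS; rewrite /vert_lcd; case: excluded_middle_informative => [h|[]];
  last by exists z.
case: constructive_indefinite_description => z0 /= z0S.
by apply: eq_bigr => i _; rewrite (proj2 (proj2 zS) z0 (proj1 (proj2 z0S)) i).
Qed.

Lemma lcd_dvdn_Denom (z : config q) :
  is_vertex cs M z -> (lcd z %| Denom cs M q)%N.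
Proof.
by move=> [S zS]; rewrite -(vert_lcd_vertex zS); apply: (biglcmn_sup S).
Qed.

Lemma Denom_dvdn d :
  (forall z : config q, is_vertex cs M z -> (lcd z %| d)%N) ->
  (Denom cs M q %| d)%N.
Proof.
move=> lcd_d; apply/dvdn_biglcmP => S _; rewrite /vert_lcd.
case: excluded_middle_informative => [h|_]; last exact: dvd1n.
case: constructive_indefinite_description => z zS /=.
by apply: lcd_d; exists S.
Qed.

End Denominator.

Lemma cross_self (u : pt2) : cross u u = 0.
Proof. by rewrite /cross mulrC subrr. Qed.

Lemma cross0r (u : pt2) : cross u (0, 0) = 0.
Proof. by rewrite /cross !mulr0 subrr. Qed.

Lemma psub_self (u : pt2) : psub u u = (0, 0).
Proof. by rewrite /psub !subrr. Qed.

Lemma psub_eq0 (x a : pt2) : psub x a = (0, 0) -> x = a.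
Proof.
by case: x a => [x1 x2] [a1 a2] [/eqP + /eqP]; rewrite !subr_eq0 => /eqP-> /eqP->.
Qed.

Lemma cross_psub_trans (u x a b : pt2) :
  cross u (psub x a) = cross u (psub x b) + cross u (psub b a).
Proof. by rewrite /cross /psub /=; ring. Qed.

Lemma cross_indep_eq0 (u v w : pt2) :
  cross u v != 0 -> cross u w = 0 -> cross v w = 0 -> w = (0, 0).
Proof.
move=> uv uw vw.
have w1 : cross u v * w.1 = v.1 * cross u w - u.1 * cross v w.
  by rewrite /cross; ring.
have w2 : cross u v * w.2 = v.2 * cross u w - u.2 * cross v w.
  by rewrite /cross; ring.
move: w1 w2; rewrite uw vw !mulr0 subr0 => /eqP + /eqP.
rewrite !mulf_eq0 (negbTE uv) /=.
by case: w {uw vw} => a b /= /eqP-> /eqP->.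
Qed.

Section Board.
Variable cs : seq pt2.
Let n := size cs.

Lemma corner_mod k : corner cs (k %% n) = corner cs k.
Proof. by rewrite /corner modn_mod. Qed.

Lemma corner_modS k : corner cs (k %% n).+1 = corner cs k.+1.
Proof. by rewrite /corner -[(k %% n).+1]addn1 -[k.+1]addn1 modnDml. Qed.

Lemma edge_dir_mod k : edge_dir cs (k %% n) = edge_dir cs k.
Proof. by rewrite /edge_dir corner_mod corner_modS. Qed.

Lemma corner_on_edge_line k : on_edge_line cs k (corner cs k).
Proof. by rewrite /on_edge_line psub_self cross0r. Qed.

Lemma cornerS_on_edge_line k : on_edge_line cs k (corner cs k.+1).
Proof. exact: cross_self. Qed.

Hypothesis board_cs : is_board cs.

Let n_ge3 : (3 <= n)%N. Proof. by case: board_cs. Qed.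
Let n_gt0 : (0 < n)%N. Proof. exact: leq_trans n_ge3. Qed.

Lemma corner_left_of_edge k j :
  (j %% n != k %% n)%N -> (j %% n != k.+1 %% n)%N ->
  0 < cross (edge_dir cs k) (psub (corner cs j) (corner cs k)).
Proof.
move=> /eqP jk /eqP jk1.
have jk1' : (j %% n)%N <> ((k %% n).+1 %% n)%N by rewrite -addn1 modnDml addn1.
have := proj2 board_cs _ _ (ltn_pmod k n_gt0) (ltn_pmod j n_gt0) jk jk1'.
by rewrite edge_dir_mod corner_mod.
Qed.

Lemma corner_in_board j : in_board cs (corner cs j).
Proof.
move=> k _; have [jk|jk] := eqVneq (j %% n)%N (k %% n)%N.
  by rewrite -(corner_mod j) jk corner_mod psub_self cross0r.
have [jk1|jk1] := eqVneq (j %% n)%N (k.+1 %% n)%N.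
  by rewrite -(corner_mod j) jk1 corner_mod cross_self.
exact/ltW/corner_left_of_edge.
Qed.

Lemma edge_lines_meet_at_corner k x :
  on_edge_line cs k x -> on_edge_line cs k.+1 x -> x = corner cs k.+1.
Proof.
rewrite /on_edge_line (cross_psub_trans _ _ _ (corner cs k.+1)) => xk xk1.
set u := edge_dir cs k in xk *; set v := edge_dir cs k.+1 in xk1.
have uv : cross u v != 0.
  have k2_k : (k.+2 %% n != k %% n)%N.
    by rewrite -addn2 -{2}(addn0 k) eqn_modDl mod0n modn_small.
  have k2_k1 : (k.+2 %% n != k.+1 %% n)%N.
    rewrite -[k.+2]addn1 -{2}(addn0 k.+1) eqn_modDl mod0n modn_small //.
    exact: leq_trans n_ge3.
  have := corner_left_of_edge k2_k k2_k1.
  rewrite (cross_psub_trans _ _ _ (corner cs k.+1)) cross_self addr0.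
  by move=> /gt_eqF->.
apply: psub_eq0; apply: (cross_indep_eq0 uv) xk1.
by move: xk; rewrite cross_self addr0.
Qed.

End Board.

Lemma sat_ext cs M q (c : con q M (size cs)) (z1 z2 : config q) :
  (forall i, z1 i = z2 i) -> sat c z1 -> sat c z2.
Proof. by move=> z12; case: c => [[p m]|[i k]] /=; rewrite /move_hyp ?z12. Qed.

Section MoreMoves.
Variables (cs : seq pt2) (M M' : seq (int * int)) (q : nat).
Hypothesis subMM' : {subset M <= M'}.

Definition lift_move_con (c : con q M (size cs)) : con q M' (size cs) :=
  match c with
  | inl (p, m) => inl (p, SeqSub (subMM' (ssvalP m)))
  | inr ik => inr ik
  end.

Lemma sat_lift_move_con c z : sat (lift_move_con c) z = sat c z.
Proof. by case: c => [[p m]|[i k]]. Qed.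

Lemma is_vertex_subset_moves (z : config q) :
  is_vertex cs M z -> is_vertex cs M' z.
Proof.
move=> [S [zB [zS zuniq]]]; exists (lift_move_con @: S); split=> //; split.
  by move=> _ /imsetP[c cS ->]; rewrite sat_lift_move_con; apply: zS.
move=> w wS; apply: zuniq => c cS.
by rewrite -sat_lift_move_con; apply/wS/imset_f.
Qed.

End MoreMoves.

Section MorePieces.
Variables (cs : seq pt2) (M : seq (int * int)) (q q' : nat).
Hypothesis le_qq' : (q <= q')%N.
Let n := size cs.
Let widen (i : 'I_q) : 'I_q' := widen_ord le_qq' i.

Definition widen_con (c : con q M n) : con q' M n :=
  match c with
  | inl (p, m) =>
      inl (exist (fun p : 'I_q' * 'I_q' => (p.1 < p.2)%N)
             (widen (sval p).1, widen (sval p).2) (proj2_sig p), m)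
  | inr (i, k) => inr (widen i, k)
  end.

Lemma sat_widen_con c (z : config q') :
  sat (widen_con c) z = sat c (fun i => z (widen i)).
Proof. by case: c => [[p m]|[i k]]. Qed.

Definition pad_config (z : config q) (p : pt2) : config q' :=
  fun j => oapp z p (insub (val j)).

Lemma pad_config_widen z p i : pad_config z p (widen i) = z i.
Proof. by rewrite /pad_config insubT //= => ?; congr z; apply: val_inj. Qed.

Lemma pad_config_ge z p (j : 'I_q') : (q <= j)%N -> pad_config z p j = p.
Proof. by move=> qj; rewrite /pad_config insubF // ltnNge qj. Qed.

Lemma lcd_pad_config z p : (lcd z %| lcd (pad_config z p))%N.
Proof.
apply/dvdn_biglcmP => i _; apply: (biglcmn_sup (widen i)) => //.
by rewrite pad_config_widen.
Qed.

Hypothesis board_cs : is_board cs.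

Let n_gt1 : (1 < n)%N. Proof. by case: board_cs => /ltnW. Qed.
Let edge0 : 'I_n := Ordinal (ltnW n_gt1).
Let edge1 : 'I_n := Ordinal n_gt1.

Definition pin_extra_pieces : {set con q' M n} :=
  [set c : con q' M n |
    if c is inr (j, k) then (q <= j)%N && (k <= 1)%N else false].

Lemma is_vertex_pad (z : config q) :
  is_vertex cs M z -> is_vertex cs M (pad_config z (corner cs 1)).
Proof.
move=> [S [zB [zS zuniq]]].
exists (widen_con @: S :|: pin_extra_pieces); split; [|split].
- move=> j; rewrite /pad_config; case: insub => [i|] /=; first exact: zB.
  exact: corner_in_board.
- move=> c; rewrite in_setU => /orP[/imsetP[c0 c0S ->]|].
    rewrite sat_widen_con; apply: sat_ext (zS _ c0S) => i.
    by rewrite pad_config_widen.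
  rewrite inE; case: c => [//|[j [[|[|k]] ?]]] /andP[qj] //= _.
    by rewrite pad_config_ge //; apply: cornerS_on_edge_line 0%N.
  by rewrite pad_config_ge //; apply: corner_on_edge_line.
- move=> w wS j; have [jq|qj] := ltnP j q.
    have -> : j = widen (Ordinal jq) by apply: val_inj.
    rewrite pad_config_widen; apply: (zuniq (fun i => w (widen i))) => c cS.
    by rewrite -sat_widen_con; apply/wS; rewrite in_setU imset_f.
  have pinned (k : 'I_n) :
      (k <= 1)%N -> inr (j, k) \in widen_con @: S :|: pin_extra_pieces.
    by move=> k1; rewrite in_setU [_ \in pin_extra_pieces]inE qj k1 orbT.
  rewrite pad_config_ge //; apply: (edge_lines_meet_at_corner board_cs (k := 0)).
    exact: wS (inr (j, edge0)) (pinned edge0 isT).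
  exact: wS (inr (j, edge1)) (pinned edge1 isT).
Qed.

End MorePieces.


Theorem proposition3p2 (cs : seq (rat * rat)) (M M' : seq (int * int))
  (q q' : nat) :
  is_board cs -> rider M -> rider M' -> {subset M <= M'} ->
  (0 < q)%N -> (q < q')%N ->
  (Denom cs M q %| Denom cs M q')%N /\ (Denom cs M q %| Denom cs M' q)%N.
Proof.
move=> board_cs _ _ subMM' _ /ltnW le_qq'; split; apply: Denom_dvdn => z zV.
  apply: dvdn_trans (lcd_pad_config le_qq' z (corner cs 1)) _.
  exact/lcd_dvdn_Denom/is_vertex_pad.
exact/lcd_dvdn_Denom/(is_vertex_subset_moves subMM').
Qed.
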